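(* Let $p(z)=c_0z^{\deg(p)}+\cdots$ be a non-constant polynomial with leading coefficient $c_0\neq0$, and let $0<\gamma<1$. Then for all $r>0$, $$\int_0^{2\pi}\frac{d\theta}{|p(re^{i\theta})|^{\gamma/\deg(p)}}\le \frac{2\pi}{(1-\gamma)|c_0|^{\gamma/\deg(p)}}\cdot\frac{1}{r^{\gamma}}.$$ *)

From Stdlib Require Import Reals.
Open Scope R_scope.

Definition Cx : Type := (R * R)%type.
Definition C0 : Cx := (0, 0).
Definition C1 : Cx := (1, 0).
Definition Cadd (z w : Cx) : Cx := (fst z + fst w, snd z + snd w).
Definition Cmul (z w : Cx) : Cx :=
  (fst z * fst w - snd z * snd w, fst z * snd w + snd z * fst w).
Fixpoint Cpow (z : Cx) (n : nat) : Cx :=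
  match n with O => C1 | S n => Cmul z (Cpow z n) end.
Definition Cnorm (z : Cx) : R := sqrt (fst z ^ 2 + snd z ^ 2).

Definition polar (r theta : R) : Cx := (r * cos theta, r * sin theta).

Fixpoint peval (a : nat -> Cx) (d : nat) (z : Cx) : Cx :=
  match d with
  | O => Cmul (a O) (Cpow z O)
  | S n => Cadd (peval a n z) (Cmul (a (S n)) (Cpow z (S n)))
  end.

(* Truncation at level M of theta |-> 1 / |p(r e^{i theta})|^{gamma/d};
   the value is +infinity at zeros of p, hence truncated to M there. *)
Definition trunc_integrand (a : nat -> Cx) (d : nat) (gamma r M theta : R) : R :=
  let v := Cnorm (peval a d (polar r theta)) in
  if Req_EM_T v 0 then M else Rmin (/ Rpower v (gamma / INR d)) M.

(* Factor p(z) = c0 * prod_j (z - w_j). The point r e^{i th} lies at distance at least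
   r |sin (th - arg w_j)| from w_j (that is its distance to the line through 0 and w_j), so
   AM-GM gives |p(r e^{i th})|^(-gamma/d) <= |c0|^(-gamma/d) / d * sum_j (r |sin (th - arg w_j)|)^(-gamma).
   Over a period, |sin|^(-gamma) integrates to at most 2 PI / (1 - gamma), by Jordan's inequality
   sin u >= 2u/PI on [0, PI/2]. The truncation at level M is absorbed by clipping |sin| from below
   at an eps so small that the clipped bound exceeds M wherever some |sin (th - arg w_j)| < eps;
   clipping also keeps every integrand continuous. *)

From Coquelicot Require Import Coquelicot.
From Stdlib Require Import Reals Lra Psatz List Classical.
From mathcomp Require all_boot all_algebra Rstruct complex.
Open Scope R_scope.

Section ListSumProd.
Context {T : Type}.

Definition suml (f : T -> R) (l : list T) : R := fold_right Rplus 0 (map f l).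
Definition prodl (f : T -> R) (l : list T) : R := fold_right Rmult 1 (map f l).

Lemma suml_cons f x l : suml f (x :: l) = f x + suml f l.
Proof. reflexivity. Qed.

Lemma suml_plus f g l : suml (fun p => f p + g p) l = suml f l + suml g l.
Proof. induction l as [|x l IH]; rewrite ?suml_cons, ?IH; unfold suml; simpl; ring. Qed.

Lemma suml_scal c f l : suml (fun p => c * f p) l = c * suml f l.
Proof. induction l as [|x l IH]; rewrite ?suml_cons, ?IH; unfold suml; simpl; ring. Qed.

Lemma suml_const c l : suml (fun _ => c) l = INR (length l) * c.
Proof. induction l as [|x l IH]; rewrite ?suml_cons, ?IH; [unfold suml; simpl; ring|].
cbn [length]; rewrite S_INR; ring. Qed.

Lemma suml_le f g l : (forall p, In p l -> f p <= g p) -> suml f l <= suml g l.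
Proof.
induction l as [|x l IH]; intro Hfg; [unfold suml; simpl; lra|].
rewrite !suml_cons. apply Rplus_le_compat; [apply Hfg; left|apply IH; intros; apply Hfg; right]; auto.
Qed.

Lemma suml_nonneg f l : (forall p, In p l -> 0 <= f p) -> 0 <= suml f l.
Proof.
intro Hf. apply Rle_trans with (suml (fun _ => 0) l); [|now apply suml_le].
rewrite suml_const. lra.
Qed.

Lemma suml_elt_le f l p : (forall q, In q l -> 0 <= f q) -> In p l -> f p <= suml f l.
Proof.
induction l as [|x l IH]; intros Hf Hp; [destruct Hp|rewrite suml_cons].
destruct Hp as [<-|Hp].
- assert (0 <= suml f l) by (apply suml_nonneg; intros; apply Hf; right; auto). lra.
- assert (0 <= f x) by (apply Hf; left; auto).
  assert (f p <= suml f l) by (apply IH; auto; intros; apply Hf; right; auto). lra.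
Qed.

Lemma prodl_pos f l : (forall p, In p l -> 0 < f p) -> 0 < prodl f l.
Proof.
induction l as [|x l IH]; intro Hf; unfold prodl; simpl; [lra|].
apply Rmult_lt_0_compat; [apply Hf; left|apply IH; intros; apply Hf; right]; auto.
Qed.

Lemma ln_prodl f l : (forall p, In p l -> 0 < f p) ->
  ln (prodl f l) = suml (fun p => ln (f p)) l.
Proof.
induction l as [|x l IH]; intro Hf; [apply ln_1|].
change (ln (f x * prodl f l) = ln (f x) + suml (fun p => ln (f p)) l).
rewrite ln_mult, IH; auto; [intros; apply Hf; right|apply Hf; left|apply prodl_pos; intros; apply Hf; right]; auto.
Qed.

Lemma Rpower_prodl f l y : (forall p, In p l -> 0 < f p) ->
  Rpower (prodl f l) y = prodl (fun p => Rpower (f p) y) l.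
Proof.
induction l as [|x l IH]; intro Hf; [unfold prodl, Rpower; simpl; rewrite ln_1, Rmult_0_r; apply exp_0|].
change (Rpower (f x * prodl f l) y = Rpower (f x) y * prodl (fun p => Rpower (f p) y) l).
rewrite <- Rpower_mult_distr, IH; auto; [intros; apply Hf; right|apply Hf; left|apply prodl_pos; intros; apply Hf; right]; auto.
Qed.

(* AM-GM: sum the tangent-line bounds [ln x <= ln A + x / A - 1] at the mean [A]. *)
Lemma Rpower_prodl_le_mean f l : (0 < length l)%nat -> (forall p, In p l -> 0 < f p) ->
  Rpower (prodl f l) (/ INR (length l)) <= suml f l / INR (length l).
Proof.
intros Hl Hf. set (n := INR (length l)).
assert (Hn : 0 < n) by (apply lt_0_INR; exact Hl).
assert (Hsum : 0 < suml f l).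
{ destruct l as [|x l']; [simpl in Hl; lia|].
  apply Rlt_le_trans with (f x); [apply Hf; left; auto|].
  apply suml_elt_le; [intros; apply Rlt_le, Hf|left]; auto. }
set (A := suml f l / n).
assert (HA : 0 < A) by (apply Rdiv_lt_0_compat; assumption).
assert (Htangent : forall p, In p l -> ln (f p) <= (ln A - 1) + / A * f p).
{ intros p Hp. assert (Hfp := Hf p Hp).
  assert (E := exp_ineq1_le (ln (f p / A))).
  rewrite exp_ln in E by (apply Rdiv_lt_0_compat; lra).
  unfold Rdiv in E. rewrite ln_mult, ln_Rinv in E by (try apply Rinv_0_lt_compat; lra). lra. }
apply suml_le in Htangent.
rewrite suml_plus, suml_const, suml_scal in Htangent. fold n in Htangent.
rewrite <- ln_prodl in Htangent by exact Hf.
unfold Rpower. rewrite <- (exp_ln A) by exact HA. apply Rnot_lt_le; intro Hlt; apply exp_lt_inv in Hlt.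
replace (/ A * suml f l) with n in Htangent by (unfold A; field; lra).
apply (Rmult_lt_compat_l n) in Hlt; [|exact Hn].
replace (n * (/ n * ln (prodl f l))) with (ln (prodl f l)) in Hlt by (field; lra). lra.
Qed.

Lemma inv_Rpower_prodl_le_mean x l g : (0 < length l)%nat -> (forall p, In p l -> 0 < x p) ->
  / Rpower (prodl x l) (g / INR (length l)) <= suml (fun p => Rpower (x p) (- g)) l / INR (length l).
Proof.
intros Hl Hx. rewrite <- Rpower_Ropp.
replace (- (g / INR (length l))) with (- g * / INR (length l)) by (unfold Rdiv; ring).
rewrite <- Rpower_mult, Rpower_prodl by exact Hx.
apply Rpower_prodl_le_mean; [exact Hl|intros; apply exp_pos].
Qed.

End ListSumProd.

Module PolynomialFactorization.
Import all_boot all_algebra Rstruct complex GRing.Theory.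

Definition toC (z : Cx) : complex R := Complex (fst z) (snd z).
Definition ofC (c : complex R) : Cx := (Re c, Im c).

Lemma Cnorm_ofC_mul (x y : complex R) : Cnorm (ofC (x * y)%R) = Cnorm (ofC x) * Cnorm (ofC y).
Proof. case: x => u v; case: y => s t; exact (Cmod_mult (u, v) (s, t)). Qed.

Lemma toC_pow z n : toC (Cpow z n) = (toC z ^+ n)%R.
Proof. elim: n => [|n IH] //=. by rewrite -[toC (Cmul _ _)]/(toC z * toC (Cpow z n))%R IH exprS. Qed.

Lemma toC_peval a n z :
  toC (peval a n z) = (\sum_(i < n.+1) toC (a i) * toC z ^+ i)%R.
Proof.
elim: n => [|n IH]; first by rewrite big_ord_recr big_ord0 /= add0r -toC_pow.
by rewrite big_ord_recr /= -IH -toC_pow.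
Qed.

Lemma Cnorm_peval_factor (a : nat -> Cx) (d : nat) : a d <> C0 ->
  exists zs : list Cx, length zs = d /\
    forall z, Cnorm (peval a d z) = Cnorm (a d) * prodl (fun w => Cnorm (Cminus z w)) zs.
Proof.
move=> had.
have hnz : toC (a d) != 0%R.
  apply/eqP => E; apply: had; move: E; case: (a d) => x y [-> ->]; reflexivity.
pose P : {poly complex R} := (\poly_(i < d.+1) toC (a i))%R.
have hlc : lead_coef P = toC (a d) := @lead_coef_poly _ d.+1 (fun i => toC (a i)) (ltn0Sn d) hnz.
have [rs Hrs] := closed_field_poly_normal P.
have hsz : size rs = d.
  have : size P = d.+1 := @size_poly_eq _ d.+1 (fun i => toC (a i)) hnz.
  by rewrite {1}Hrs size_scale ?hlc // size_prod_XsubC => -[].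
exists (map ofC rs); split; first by rewrite length_map -hsz.
move=> z.
have HE : toC (peval a d z) = (toC (a d) * \prod_(w <- rs) (toC z - w))%R.
  have -> : toC (peval a d z) = P.[toC z]%R by rewrite toC_peval horner_poly.
  rewrite {1}Hrs hornerZ hlc horner_prod.
  by congr (_ * _)%R; apply: eq_bigr => w _; rewrite hornerXsubC.
rewrite -[Cnorm (peval a d z)]/(Cnorm (ofC (toC (peval a d z)))) HE Cnorm_ofC_mul.
congr (_ * _).
elim: rs {Hrs hsz HE} => [|w rs IH].
  rewrite big_nil /Cnorm /=; change (sqrt (1 * (1 * 1) + 0 * (0 * 1)) = 1).
  by rewrite Rmult_0_l Rplus_0_r !Rmult_1_l sqrt_1.
by rewrite big_cons Cnorm_ofC_mul IH; case: w.
Qed.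

End PolynomialFactorization.

(* At [z = 0] the quotient is the junk value [0 / 0 = 0], but then any angle works. *)
Definition Carg (z : Cx) : R :=
  if Rle_dec 0 (snd z) then acos (fst z / Cnorm z) else - acos (fst z / Cnorm z).

Lemma polar_Cnorm_Carg (z : Cx) : z = polar (Cnorm z) (Carg z).
Proof.
destruct z as [u v]. unfold Carg, polar, Cnorm; cbn [fst snd].
set (rho := sqrt (u ^ 2 + v ^ 2)).
assert (Hrho2 : rho * rho = u ^ 2 + v ^ 2) by (apply sqrt_sqrt; nra).
destruct (Req_dec rho 0) as [Hrho0|Hrho0].
{ assert (u = 0) by nra. assert (v = 0) by nra. rewrite Hrho0. f_equal; lra. }
assert (Hrho : 0 < rho) by (assert (0 <= rho) by apply sqrt_pos; lra).
assert (Hc : -1 <= u / rho <= 1).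
{ split; [apply Rmult_le_reg_r with rho|apply Rmult_le_reg_r with rho]; try lra;
  unfold Rdiv; rewrite Rmult_assoc, Rinv_l by lra; nra. }
assert (Hs : sqrt (1 - (u / rho)²) = Rabs (v / rho)).
{ rewrite <- sqrt_Rsqr_abs. f_equal. unfold Rsqr. field_simplify_eq; [nra|lra]. }
destruct (Rle_dec 0 v) as [Hv|Hv].
- rewrite cos_acos, sin_acos, Hs, Rabs_pos_eq by (auto; apply Rdiv_le_0_compat; lra).
  f_equal; field; lra.
- rewrite cos_neg, sin_neg, cos_acos, sin_acos, Hs, Rabs_left by (auto; apply Rdiv_neg_pos; lra).
  f_equal; field; lra.
Qed.

(* Distance from [r e^{i th}] to the line through 0 and [rho e^{i phi}]. *)
Lemma Cnorm_sub_polar_ge (r th rho phi : R) :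
  r * Rabs (sin (th - phi)) <= Cnorm (Cminus (polar r th) (polar rho phi)).
Proof.
apply Rle_trans with (Rabs (r * sin (th - phi))).
{ rewrite Rabs_mult. apply Rmult_le_compat_r; [apply Rabs_pos|apply Rle_abs]. }
rewrite <- sqrt_Rsqr_abs. apply sqrt_le_1_alt.
unfold Cnorm, Cminus, Cplus, Copp, polar; cbn [fst snd]; unfold Rsqr.
assert (Hth := sin2_cos2 th). assert (Hphi := sin2_cos2 phi). unfold Rsqr in Hth, Hphi.
(* the squared distance is (rho - r cos (th - phi))^2 + (r sin (th - phi))^2 *)
assert (E : (r * cos th + - (rho * cos phi)) ^ 2 + (r * sin th + - (rho * sin phi)) ^ 2
  - ((rho - r * cos (th - phi)) ^ 2 + r * sin (th - phi) * (r * sin (th - phi)))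
  = rho ^ 2 * ((sin phi * sin phi + cos phi * cos phi) - 1)
    + r ^ 2 * (sin th * sin th + cos th * cos th) * (1 - (sin phi * sin phi + cos phi * cos phi)))
  by (rewrite cos_minus, sin_minus; ring).
rewrite Hth, Hphi in E. pose proof (pow2_ge_0 (rho - r * cos (th - phi))). lra.
Qed.

Lemma Cnorm_sub_polar_ge_Carg (r th : R) (w : Cx) :
  r * Rabs (sin (th - Carg w)) <= Cnorm (Cminus (polar r th) w).
Proof.
pose proof (Cnorm_sub_polar_ge r th (Cnorm w) (Carg w)) as H.
rewrite <- polar_Cnorm_Carg in H. exact H.
Qed.

Lemma Rpower_pos (x y : R) : 0 < Rpower x y.
Proof. apply exp_pos. Qed.

Lemma Rpower_opp_le_compat (x y g : R) : 0 <= g -> 0 < x <= y -> Rpower y (- g) <= Rpower x (- g).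
Proof.
intros Hg Hxy. rewrite !Rpower_Ropp.
apply Rinv_le_contravar; [apply Rpower_pos|apply Rle_Rpower_l; lra].
Qed.

Lemma continuous_Rpower_l (x y : R) : 0 < x -> continuous (fun u => Rpower u y) x.
Proof.
intro Hx. apply (@ex_derive_continuous R_AbsRing R_NormedModule).
exists (y * Rpower x (y - 1)). apply is_derive_Reals, derivable_pt_lim_power, Hx.
Qed.

Lemma continuous_Rmax (f g : R -> R) (x : R) :
  continuous f x -> continuous g x -> continuous (fun t => Rmax (f t) (g t)) x.
Proof.
intros Hf Hg. apply continuity_pt_filterlim in Hf, Hg. apply continuity_pt_filterlim.
apply continuity_pt_ext with (fun t => (f t + g t + Rabs (f t - g t)) / 2).
{ intro t. unfold Rmax. destruct (Rle_dec (f t) (g t)); [rewrite Rabs_left1|rewrite Rabs_right]; lra. }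
unfold Rdiv. apply continuity_pt_mult; [|apply continuity_pt_const; intros ? ?; reflexivity].
apply continuity_pt_plus; [apply continuity_pt_plus; assumption|].
apply (continuity_pt_comp (fun t => f t - g t) Rabs); [apply continuity_pt_minus; assumption|].
apply Rcontinuity_abs.
Qed.

Lemma ex_RInt_continuous_R (f : R -> R) (a b : R) : (forall t, continuous f t) -> ex_RInt f a b.
Proof. intro Hf. apply (@ex_RInt_continuous R_CompleteNormedModule). intros; apply Hf. Qed.

Lemma is_RInt_Rpower_opp (g lo hi : R) : 0 < lo -> 0 < hi -> g <> 1 ->
  is_RInt (fun u => Rpower u (- g)) lo hi ((Rpower hi (1 - g) - Rpower lo (1 - g)) / (1 - g)).
Proof.
intros Hlo Hhi Hg.
assert (Hpos : forall x, Rmin lo hi <= x <= Rmax lo hi -> 0 < x).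
{ intros x Hx. apply Rlt_le_trans with (Rmin lo hi); [apply Rmin_glb_lt|]; lra. }
replace ((Rpower hi (1 - g) - Rpower lo (1 - g)) / (1 - g)) with
  (minus (Rpower hi (1 - g) / (1 - g)) (Rpower lo (1 - g) / (1 - g)))
  by (unfold minus, plus, opp; simpl; field; lra).
apply (is_RInt_derive (fun u => Rpower u (1 - g) / (1 - g))).
- intros x Hx. apply is_derive_Reals.
  replace (Rpower x (- g)) with (/ (1 - g) * ((1 - g) * Rpower x (1 - g - 1)))
    by (replace (1 - g - 1) with (- g) by ring; field; lra).
  apply (derivable_pt_lim_ext (fun u => / (1 - g) * Rpower u (1 - g))); [intro; unfold Rdiv; ring|].
  apply derivable_pt_lim_scal, derivable_pt_lim_power, Hpos, Hx.
- intros x Hx. apply continuous_Rpower_l, Hpos, Hx.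
Qed.

(* Jordan's inequality: [sin] is concave on [0, PI/2], hence above its chord. *)
Lemma sin_ge_chord (u : R) : 0 <= u <= PI / 2 -> 2 / PI * u <= sin u.
Proof.
intros Hu. assert (HPI := PI_RGT_0).
assert (Hd : forall x, is_derive sin x (cos x)) by (intro; apply is_derive_Reals, derivable_pt_lim_sin).
destruct (MVT_gen sin 0 u cos) as [c1 [Hc1 E1]]; [intros; apply Hd|intros; apply continuity_sin|].
destruct (MVT_gen sin u (PI / 2) cos) as [c2 [Hc2 E2]]; [intros; apply Hd|intros; apply continuity_sin|].
rewrite Rmin_left, Rmax_right in Hc1, Hc2 by lra.
rewrite sin_0 in E1. rewrite sin_PI2 in E2.
assert (Hc : cos c2 <= cos c1).
{ destruct (Req_dec c1 c2) as [->|Hne]; [lra|]. left. apply cos_decreasing_1; lra. }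
assert (K : sin u * (PI / 2) - u = (cos c1 - cos c2) * u * (PI / 2 - u)) by nra.
assert (0 <= (cos c1 - cos c2) * u * (PI / 2 - u)) by (apply Rmult_le_pos; [apply Rmult_le_pos|]; lra).
apply Rmult_le_reg_l with (PI / 2); [lra|].
replace (PI / 2 * (2 / PI * u)) with u by (field; lra). lra.
Qed.

(* Split [0, a] at a small [dl]: the piece [0, dl] costs at most [S * dl]. *)
Lemma RInt_le_singular (f : R -> R) (a c S g : R) :
  0 < a -> 0 <= c -> 0 < g < 1 -> (forall t, continuous f t) ->
  (forall u, 0 <= u <= a -> f u <= S) ->
  (forall u, 0 < u <= a -> f u <= c * Rpower u (- g)) ->
  RInt f 0 a <= c * Rpower a (1 - g) / (1 - g).
Proof.
intros Ha Hc Hg Hcont HS Hsing.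
assert (Hex : forall x y, ex_RInt f x y) by (intros; apply ex_RInt_continuous_R, Hcont).
apply Rle_plus_epsilon. intros eps Heps.
set (dl := Rmin a (eps / (Rabs S + 1))).
assert (Hdl : 0 < dl <= a).
{ split; [apply Rmin_pos; [lra|apply Rdiv_lt_0_compat; [lra|pose proof (Rabs_pos S); lra]]|apply Rmin_l]. }
assert (Hnear : RInt f 0 dl <= eps).
{ apply Rle_trans with (RInt (fun _ => S) 0 dl).
  - apply RInt_le; [lra|apply Hex|apply ex_RInt_const|intros x Hx; apply HS; lra].
  - rewrite RInt_const. unfold scal; simpl; unfold mult; simpl.
    assert (dl * (Rabs S + 1) <= eps).
    { apply Rle_trans with (eps / (Rabs S + 1) * (Rabs S + 1)).
      - apply Rmult_le_compat_r; [pose proof (Rabs_pos S); lra|apply Rmin_r].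
      - right. field. pose proof (Rabs_pos S); lra. }
    pose proof (Rle_abs S). nra. }
assert (Hint : is_RInt (fun u => c * Rpower u (- g)) dl a
  (c * ((Rpower a (1 - g) - Rpower dl (1 - g)) / (1 - g))))
  by exact (is_RInt_scal _ _ _ c _ (is_RInt_Rpower_opp g dl a ltac:(lra) ltac:(lra) ltac:(lra))).
assert (Hfar : RInt f dl a <= c * Rpower a (1 - g) / (1 - g)).
{ apply Rle_trans with (RInt (fun u => c * Rpower u (- g)) dl a).
  - apply RInt_le; [lra|apply Hex|eexists; exact Hint|intros x Hx; apply Hsing; lra].
  - rewrite (is_RInt_unique _ _ _ _ Hint).
    assert (0 <= c * Rpower dl (1 - g) / (1 - g))
      by (apply Rdiv_le_0_compat; [apply Rmult_le_pos; [lra|apply Rlt_le, Rpower_pos]|lra]).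
    apply Rle_trans with (c * Rpower a (1 - g) / (1 - g) - c * Rpower dl (1 - g) / (1 - g)); [right; field|]; lra. }
rewrite <- (RInt_Chasles f 0 dl a) by apply Hex. unfold plus; simpl. lra.
Qed.

Lemma RInt_shift (f : R -> R) (v a b : R) : (forall t, continuous f t) ->
  RInt (fun y => f (y + v)) a b = RInt f (a + v) (b + v).
Proof.
intro Hf.
assert (E := RInt_comp_lin f 1 v a b (ex_RInt_continuous_R f _ _ Hf)).
rewrite !Rmult_1_l in E. rewrite <- E.
apply RInt_ext. intros x _. unfold scal; simpl; unfold mult; simpl. now rewrite !Rmult_1_l.
Qed.

Lemma RInt_periodic (f : R -> R) (T c : R) : (forall t, continuous f t) ->
  (forall t, f (t + T) = f t) -> RInt f c (c + T) = RInt f 0 T.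
Proof.
intros Hf Hper.
assert (Hex : forall x y, ex_RInt f x y) by (intros; apply ex_RInt_continuous_R, Hf).
assert (Hwrap : RInt f T (c + T) = RInt f 0 c).
{ rewrite <- (Rplus_0_l T) at 1. rewrite <- RInt_shift by exact Hf.
  apply RInt_ext. intros; apply Hper. }
assert (C1 := RInt_Chasles f c T (c + T) (Hex _ _) (Hex _ _)).
assert (C2 := RInt_Chasles f 0 c T (Hex _ _) (Hex _ _)).
unfold plus in C1, C2; simpl in C1, C2. lra.
Qed.

Lemma RInt_reflect_half (f : R -> R) (a : R) : (forall t, continuous f t) ->
  (forall t, f (a - t) = f t) -> RInt f 0 a = 2 * RInt f 0 (a / 2).
Proof.
intros Hf Hsym.
assert (Hex : forall x y, ex_RInt f x y) by (intros; apply ex_RInt_continuous_R, Hf).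
assert (E := RInt_comp_lin f (-1) a (a / 2) a (Hex _ _)).
replace (-1 * (a / 2) + a) with (a / 2) in E by field.
replace (-1 * a + a) with 0 in E by ring.
assert (Hhalf : - RInt f (a / 2) a = - RInt f 0 (a / 2)).
{ transitivity (RInt (fun y => opp (f y)) (a / 2) a); [symmetry; exact (RInt_opp f _ _ (Hex _ _))|].
  transitivity (RInt f (a / 2) 0); [|exact (eq_sym (opp_RInt_swap f 0 (a / 2) (Hex _ _)))].
  rewrite <- E. apply RInt_ext. intros x _. unfold scal, opp; simpl; unfold mult; simpl.
  replace (-1 * x + a) with (a - x) by ring. rewrite Hsym. ring. }
assert (C := RInt_Chasles f 0 (a / 2) a (Hex _ _) (Hex _ _)).
unfold plus in C; simpl in C. lra.
Qed.

Definition sin_clip_pow (eps g t : R) : R := Rpower (Rmax eps (Rabs (sin t))) (- g).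

Lemma continuous_sin_clip_pow (eps g t : R) : 0 < eps -> continuous (sin_clip_pow eps g) t.
Proof.
intro Heps. apply (continuous_comp (fun t => Rmax eps (Rabs (sin t))) (fun u => Rpower u (- g))).
- apply continuous_Rmax; [apply continuous_const|apply continuous_Rabs_comp, continuous_sin].
- apply continuous_Rpower_l. apply Rlt_le_trans with eps; [exact Heps|apply Rmax_l].
Qed.

Lemma sin_clip_pow_le (eps g t : R) : 0 < eps -> 0 <= g -> sin_clip_pow eps g t <= Rpower eps (- g).
Proof. intros Heps Hg. apply Rpower_opp_le_compat; [exact Hg|split; [exact Heps|apply Rmax_l]]. Qed.

Lemma RInt_sin_clip_pow_quarter (eps g : R) : 0 < eps -> 0 < g < 1 ->
  RInt (sin_clip_pow eps g) 0 (PI / 2) <= (PI / 2) / (1 - g).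
Proof.
intros Heps Hg. assert (HPI := PI_RGT_0).
replace ((PI / 2) / (1 - g)) with (Rpower (PI / 2) g * Rpower (PI / 2) (1 - g) / (1 - g))
  by (rewrite <- Rpower_plus, Rplus_minus, Rpower_1 by lra; reflexivity).
apply (RInt_le_singular _ _ _ (Rpower eps (- g))).
- lra.
- apply Rlt_le, Rpower_pos.
- exact Hg.
- intro; apply continuous_sin_clip_pow, Heps.
- intros; apply sin_clip_pow_le; lra.
- intros u Hu.
  assert (Hchord : 0 < 2 / PI * u <= Rmax eps (Rabs (sin u))).
  { split; [apply Rmult_lt_0_compat; [apply Rdiv_lt_0_compat|]; lra|].
    apply Rle_trans with (sin u); [apply sin_ge_chord; lra|].
    apply Rle_trans with (Rabs (sin u)); [apply Rle_abs|apply Rmax_r]. }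
  apply Rle_trans with (1 := Rpower_opp_le_compat _ _ g ltac:(lra) Hchord).
  rewrite <- Rpower_mult_distr by (try apply Rdiv_lt_0_compat; lra).
  right. f_equal. replace (2 / PI) with (/ (PI / 2)) by (field; lra).
  unfold Rpower. rewrite ln_Rinv by lra. f_equal. ring.
Qed.

Lemma RInt_sin_clip_pow_period (eps g c : R) : 0 < eps -> 0 < g < 1 ->
  RInt (sin_clip_pow eps g) c (c + 2 * PI) <= 2 * PI / (1 - g).
Proof.
intros Heps Hg. assert (HPI := PI_RGT_0).
assert (Hf : forall t, continuous (sin_clip_pow eps g) t) by (intro; apply continuous_sin_clip_pow, Heps).
assert (Hper : forall t, sin_clip_pow eps g (t + PI) = sin_clip_pow eps g t)
  by (intro; unfold sin_clip_pow; rewrite neg_sin, Rabs_Ropp; reflexivity).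
assert (Hsym : forall t, sin_clip_pow eps g (PI - t) = sin_clip_pow eps g t)
  by (intro; unfold sin_clip_pow; rewrite sin_PI_x; reflexivity).
rewrite <- (RInt_Chasles _ c (c + PI)) by apply ex_RInt_continuous_R, Hf.
replace (c + 2 * PI) with ((c + PI) + PI) by ring. unfold plus; simpl.
rewrite !RInt_periodic, RInt_reflect_half by assumption.
pose proof (RInt_sin_clip_pow_quarter eps g Heps Hg).
apply Rle_trans with (4 * ((PI / 2) / (1 - g))); [lra|right; field; lra].
Qed.

Lemma RInt_sin_clip_pow_shift (eps g phi : R) : 0 < eps -> 0 < g < 1 ->
  RInt (fun th => sin_clip_pow eps g (th - phi)) 0 (2 * PI) <= 2 * PI / (1 - g).
Proof.
intros Heps Hg.
rewrite (RInt_shift (sin_clip_pow eps g) (- phi)) by (intro; apply continuous_sin_clip_pow, Heps).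
replace (2 * PI + - phi) with ((0 + - phi) + 2 * PI) by ring.
apply RInt_sin_clip_pow_period; assumption.
Qed.

Lemma is_RInt_suml {T : Type} (h : T -> R -> R) (I : T -> R) (l : list T) (a b : R) :
  (forall p, In p l -> is_RInt (h p) a b (I p)) ->
  is_RInt (fun x => suml (fun p => h p x) l) a b (suml I l).
Proof.
induction l as [|p l IH]; intro Hh.
- assert (H0 := is_RInt_const a b 0).
  unfold scal in H0; simpl in H0; unfold mult in H0; simpl in H0. rewrite Rmult_0_r in H0. exact H0.
- exact (is_RInt_plus _ _ _ _ _ _ (Hh p (or_introl eq_refl)) (IH (fun q Hq => Hh q (or_intror Hq)))).
Qed.

Lemma continuous_sin_clip_pow_sub (eps g phi t : R) : 0 < eps ->
  continuous (fun th => sin_clip_pow eps g (th - phi)) t.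
Proof.
intro Heps. apply (continuous_comp (fun th => th - phi)); [|apply continuous_sin_clip_pow, Heps].
apply continuity_pt_filterlim, continuity_pt_minus;
  [apply continuity_pt_id|apply continuity_pt_const; intros ? ?; reflexivity].
Qed.

Section PolynomialBound.
Variables (a : nat -> Cx) (d : nat) (zs : list Cx) (gamma r : R).
Hypotheses (hd : (1 <= d)%nat) (hg0 : 0 < gamma) (hg1 : gamma < 1) (hr : 0 < r)
  (hlead : 0 < Cnorm (a d)) (hlen : length zs = d)
  (hfactor : forall z, Cnorm (peval a d z) = Cnorm (a d) * prodl (fun w => Cnorm (Cminus z w)) zs).

Let K : R := / Rpower (Cnorm (a d)) (gamma / INR d) * / INR d * / Rpower r gamma.

Lemma K_pos : 0 < K.
Proof.
assert (0 < INR d) by (apply lt_0_INR; lia).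
unfold K. repeat apply Rmult_lt_0_compat; apply Rinv_0_lt_compat; try apply Rpower_pos; lra.
Qed.

Lemma trunc_integrand_le_away (M eps th : R) :
  (forall w, In w zs -> 0 < eps <= Rabs (sin (th - Carg w))) ->
  trunc_integrand a d gamma r M th <= K * suml (fun w => sin_clip_pow eps gamma (th - Carg w)) zs.
Proof.
intro Hsin.
set (x := fun w : Cx => Cnorm (Cminus (polar r th) w)).
assert (Hx : forall w, In w zs -> 0 < r * Rabs (sin (th - Carg w)) <= x w).
{ intros w Hw. specialize (Hsin w Hw).
  split; [apply Rmult_lt_0_compat; lra|apply Cnorm_sub_polar_ge_Carg]. }
assert (Hxpos : forall w, In w zs -> 0 < x w) by (intros w Hw; specialize (Hx w Hw); lra).
assert (Hprod := prodl_pos x zs Hxpos).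
apply Rle_trans with (/ Rpower (Cnorm (a d) * prodl x zs) (gamma / INR d)).
{ assert (Hv : Cnorm (peval a d (polar r th)) = Cnorm (a d) * prodl x zs) by apply hfactor.
  assert (0 < Cnorm (a d) * prodl x zs) by (apply Rmult_lt_0_compat; assumption).
  unfold trunc_integrand. rewrite Hv. destruct (Req_EM_T _ 0); [lra|apply Rmin_l]. }
rewrite <- Rpower_mult_distr, Rinv_mult by assumption.
unfold K. rewrite !Rmult_assoc. apply Rmult_le_compat_l; [apply Rlt_le, Rinv_0_lt_compat, Rpower_pos|].
rewrite <- hlen. eapply Rle_trans; [apply inv_Rpower_prodl_le_mean; [lia|exact Hxpos]|].
unfold Rdiv. rewrite Rmult_comm. apply Rmult_le_compat_l; [apply Rlt_le, Rinv_0_lt_compat, lt_0_INR; lia|].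
rewrite <- suml_scal. apply suml_le. intros w Hw. specialize (Hsin w Hw).
unfold sin_clip_pow. rewrite Rmax_right by lra.
rewrite <- Rpower_Ropp, Rpower_mult_distr by lra.
apply Rpower_opp_le_compat; [lra|apply Hx, Hw].
Qed.

Lemma trunc_integrand_le (M eps th : R) : 0 < eps -> M <= K * Rpower eps (- gamma) ->
  trunc_integrand a d gamma r M th <= K * suml (fun w => sin_clip_pow eps gamma (th - Carg w)) zs.
Proof.
intros Heps HM. assert (HK := K_pos).
destruct (classic (exists w, In w zs /\ Rabs (sin (th - Carg w)) < eps)) as [[w [Hw Hnear]]|Hfar].
- assert (HtM : trunc_integrand a d gamma r M th <= M).
  { unfold trunc_integrand. destruct (Req_EM_T _ 0); [lra|apply Rmin_r]. }
  apply Rle_trans with (K * sin_clip_pow eps gamma (th - Carg w)).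
  + unfold sin_clip_pow. rewrite Rmax_left by lra. lra.
  + apply Rmult_le_compat_l; [lra|].
    apply (suml_elt_le (fun w => sin_clip_pow eps gamma (th - Carg w))); [|exact Hw].
    intros; apply Rlt_le, Rpower_pos.
- apply trunc_integrand_le_away. intros w Hw. split; [exact Heps|].
  apply Rnot_lt_le. intro. apply Hfar. exists w; auto.
Qed.

Lemma RiemannInt_trunc_integrand_le (M : R)
  (pr : Riemann_integrable (trunc_integrand a d gamma r M) 0 (2 * PI)) :
  RiemannInt pr <= 2 * PI / ((1 - gamma) * Rpower (Cnorm (a d)) (gamma / INR d)) * / Rpower r gamma.
Proof.
assert (HK := K_pos). assert (HPI := PI_RGT_0).
assert (HdR : 0 < INR d) by (apply lt_0_INR; lia).
set (eps := Rpower (Rmax 1 (M / K)) (- / gamma)).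
assert (Heps : 0 < eps) by apply Rpower_pos.
assert (HM : M <= K * Rpower eps (- gamma)).
{ unfold eps. rewrite Rpower_mult. replace (- / gamma * - gamma) with 1 by (field; lra).
  rewrite Rpower_1 by (apply Rlt_le_trans with 1; [lra|apply Rmax_l]).
  apply Rle_trans with (K * (M / K)); [right; field; lra|].
  apply Rmult_le_compat_l; [lra|apply Rmax_r]. }
set (h := fun w th => sin_clip_pow eps gamma (th - Carg w)).
assert (Hsum := is_RInt_suml h (fun w => RInt (h w) 0 (2 * PI)) zs 0 (2 * PI)
  (fun w _ => RInt_correct _ _ _ (ex_RInt_continuous_R _ _ _ (fun t => continuous_sin_clip_pow_sub eps gamma (Carg w) t Heps)))).
assert (HKsum : is_RInt (fun th => K * suml (fun w => h w th) zs) 0 (2 * PI)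
  (K * suml (fun w => RInt (h w) 0 (2 * PI)) zs)) by exact (is_RInt_scal _ _ _ K _ Hsum).
rewrite <- RInt_Reals.
apply Rle_trans with (RInt (fun th => K * suml (fun w => h w th) zs) 0 (2 * PI)).
{ apply RInt_le; [lra|exact (ex_RInt_Reals_1 _ _ _ pr)|eexists; exact HKsum|].
  intros th _. apply trunc_integrand_le; assumption. }
rewrite (is_RInt_unique _ _ _ _ HKsum).
apply Rle_trans with (K * suml (fun _ => 2 * PI / (1 - gamma)) zs).
{ apply Rmult_le_compat_l; [lra|]. apply suml_le. intros w _.
  apply RInt_sin_clip_pow_shift; [exact Heps|lra]. }
rewrite suml_const, hlen. right. unfold K. field.
repeat split; try lra; apply Rgt_not_eq, Rpower_pos.
Qed.

End PolynomialBound.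

Theorem lemma5 (a : nat -> Cx) (d : nat) (gamma r : R)
  (hd : (1 <= d)%nat) (hlead : a d <> C0)
  (hg0 : 0 < gamma) (hg1 : gamma < 1) (hr : 0 < r) :
  forall (M : R)
    (pr : Riemann_integrable (trunc_integrand a d gamma r M) 0 (2 * PI)),
    RiemannInt pr <=
      2 * PI / ((1 - gamma) * Rpower (Cnorm (a d)) (gamma / INR d))
      * / Rpower r gamma.
Proof.
destruct (PolynomialFactorization.Cnorm_peval_factor a d hlead) as [zs [hlen hfactor]].
apply (RiemannInt_trunc_integrand_le a d zs); try assumption.
apply Cmod_gt_0, hlead.
Qed.
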